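(* Let $A=\omega_1^*+\omega_1$. There exist linear orders $X$ and $Y$ with $X\not\cong Y$ such that \[ X\cong A\times Y,\qquad X\cong Y\times\omega,\qquad Y\cong A\times X,\qquad Y\cong X\times\omega . \] In particular, there exist two non-isomorphic linear orders each of which is both a left-hand divisor and a right-hand divisor of the other.
   Context: For linear orders $X,Y$, the lexicographical product $X\times Y$ is the set $\{(x,y):x\in X,\ y\in Y\}$ ordered lexicographically (first by $x$, then by $y$); equivalently, it is the order obtained from $X$ by replacing each point of $X$ with a copy of $Y$. For linear orders $X$ and $Y$, $X+Y$ denotes a copy of $X$ followed by a copy of $Y$, and $X^*$ denotes the reverse of $X$. $\omega$ is the order type of the natural numbers and $\omega_1$ is the first uncountable ordinal, so $A=\omega_1^*+\omega_1$ is the reverse of $\omega_1$ followed by $\omega_1$. An order $Z$ is a left-hand divisor of $W$ if $W\cong Z\times B$ for some order $B$, and a right-hand divisor of $W$ if $W\cong B\times Z$ for some order $B$. *)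

From Stdlib Require Import Arith.

Record LinOrd : Type := {
  carrier :> Type;
  lt : carrier -> carrier -> Prop;
  lt_irrefl : forall x, ~ lt x x;
  lt_trans : forall x y z, lt x y -> lt y z -> lt x z;
  lt_total : forall x y, lt x y \/ x = y \/ lt y x
}.
Arguments lt {l} _ _.

Definition iso (X Y : LinOrd) : Prop :=
  exists f : X -> Y,
    (forall y : Y, exists x : X, f x = y) /\
    (forall x1 x2 : X, f x1 = f x2 -> x1 = x2) /\
    (forall x1 x2 : X, lt x1 x2 <-> lt (f x1) (f x2)).

Definition countable (T : Type) : Prop :=
  exists f : T -> nat, forall a b, f a = f b -> a = b.

Definition is_omega1 (W : LinOrd) : Prop :=
  well_founded (@lt W) /\
  ~ countable W /\
  forall w : W, countable {v : W | lt v w}.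

Program Definition omega : LinOrd := {| carrier := nat; lt := Peano.lt |}.
Next Obligation. apply Nat.lt_irrefl. Qed.
Next Obligation. eapply Nat.lt_trans; eauto. Qed.
Next Obligation. destruct (Nat.lt_trichotomy x y) as [H|[H|H]]; auto. Qed.

Program Definition rev (X : LinOrd) : LinOrd :=
  {| carrier := carrier X; lt := fun a b => lt b a |}.
Next Obligation. apply lt_irrefl. Qed.
Next Obligation. eapply lt_trans; eauto. Qed.
Next Obligation. destruct (lt_total X x y) as [H|[H|H]]; auto. Qed.

Definition sum_lt (X Y : LinOrd) (a b : X + Y) : Prop :=
  match a, b with
  | inl x1, inl x2 => lt x1 x2
  | inr y1, inr y2 => lt y1 y2
  | inl _, inr _ => True
  | inr _, inl _ => False
  end.

Program Definition osum (X Y : LinOrd) : LinOrd :=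
  {| carrier := (carrier X + carrier Y)%type; lt := sum_lt X Y |}.
Next Obligation. destruct x; simpl; apply lt_irrefl. Qed.
Next Obligation.
  destruct x, y, z; simpl in *; try contradiction; auto; eapply lt_trans; eauto.
Qed.
Next Obligation.
  destruct x as [a|a], y as [b|b]; simpl; auto.
  - destruct (lt_total X a b) as [H|[H|H]]; subst; auto.
  - destruct (lt_total Y a b) as [H|[H|H]]; subst; auto.
Qed.

(** Lexicographic product X x Y: ordered first by x, then by y
    (each point of X replaced by a copy of Y). *)
Definition lex_lt (X Y : LinOrd) (a b : X * Y) : Prop :=
  lt (fst a) (fst b) \/ (fst a = fst b /\ lt (snd a) (snd b)).

Program Definition lexprod (X Y : LinOrd) : LinOrd :=
  {| carrier := (carrier X * carrier Y)%type; lt := lex_lt X Y |}.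
Next Obligation.
  unfold lex_lt; intros [H|[_ H]]; eapply lt_irrefl; eauto.
Qed.
Next Obligation.
  unfold lex_lt in *; destruct H as [H|[E H]], H0 as [H0|[E0 H0]].
  - left; eapply lt_trans; eauto.
  - left; rewrite <- E0; auto.
  - left; rewrite E; auto.
  - right; split; [congruence | eapply lt_trans; eauto].
Qed.
Next Obligation.
  match goal with |- lex_lt _ _ ?p ?q \/ _ => destruct p as [a1 b1], q as [a2 b2] end; unfold lex_lt; simpl.
  destruct (lt_total X a1 a2) as [H|[H|H]]; auto; subst.
  destruct (lt_total Y b1 b2) as [H|[H|H]]; subst; auto.
Qed.

From Stdlib Require Import Arith Lia Bool Wf_nat Cantor.
From Stdlib Require Import Classical ClassicalEpsilon FunctionalExtensionality ProofIrrelevance.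

(* [X := Z false] and [Y := Z true] consist of pairs (a, n) of an A-valued and a
   nat-valued sequence; removing the leading A-coordinate or the trailing
   ω-coordinate of a point flips the parity [e], which gives X ≅ A × Y ≅ Y × ω and
   Y ≅ A × X ≅ X × ω.

   Suppose f : X → Y is an isomorphism. The ω-coordinates are order-definable:
   the points whose first k of them vanish are obtained by k times discarding the
   points that have an immediate predecessor, and among those the k-th coordinate
   counts immediate predecessors. Hence f preserves n. For the A-coordinates, a
   closing-off argument in ω₁ yields letters a_k, a'_k, in the right copy of ω₁
   for even k and in the left one for odd k, such that f maps the points whose
   a-part begins below (k even) or above (k odd) a_0 … a_k exactly onto those
   whose a-part begins below or above a'_0 … a'_k. Then f sends (a, n) to
   (a', n); but a and a' alternate with the same phase while X and Y differ in
   parity. *)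

(** * Closing-off arguments in ω₁ *)

Section Omega1.
Variable W : LinOrd.
Hypothesis HW : is_omega1 W.

Lemma omega1_inhabited : inhabited W.
Proof.
  destruct HW as [_ [Hunc _]].
  apply NNPP; intro Hempty; apply Hunc.
  exists (fun w => False_rect nat (Hempty (inhabits w))).
  intros a; destruct (Hempty (inhabits a)).
Qed.

Lemma omega1_closed_segment_countable (w : W) : exists g : W -> nat,
  forall a b, (lt a w \/ a = w) -> (lt b w \/ b = w) -> g a = g b -> a = b.
Proof.
  destruct HW as [_ [_ Hseg]].
  destruct (Hseg w) as [g Hg].
  exists (fun v => match excluded_middle_informative (lt v w) with
                   | left h => S (g (exist _ v h)) | right _ => 0 end).
  intros a b Ha Hb.
  destruct (excluded_middle_informative (lt a w)) as [ha|ha];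
  destruct (excluded_middle_informative (lt b w)) as [hb|hb]; intro E; try discriminate.
  - injection E as E. apply Hg in E. injection E as E. exact E.
  - destruct Ha, Hb; congruence.
Qed.

Lemma omega1_exists_gt (w : W) : exists v, lt w v.
Proof.
  destruct HW as [_ [Hunc _]].
  apply NNPP; intro Hmax; apply Hunc.
  destruct (omega1_closed_segment_countable w) as [g Hg].
  exists g. intros a b. apply Hg;
    [destruct (lt_total W a w) as [h|[h|h]] | destruct (lt_total W b w) as [h|[h|h]]];
    auto; exfalso; eauto.
Qed.

Lemma omega1_seq_bounded (s : nat -> W) : exists v, forall n, lt (s n) v.
Proof.
  destruct HW as [_ [Hunc _]].
  apply NNPP; intro Hunb; apply Hunc.
  assert (Hcover : forall v, exists n, lt v (s n) \/ v = s n).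
  { intro v. apply NNPP; intro Hv. apply Hunb. exists v. intro n.
    destruct (lt_total W (s n) v) as [h|[h|h]]; auto; exfalso; eauto. }
  destruct (choice _ Hcover) as [N HN].
  destruct (choice _ (fun n => omega1_closed_segment_countable (s n))) as [g Hg].
  exists (fun v => to_nat (N v, g (N v) v)).
  intros a b E. apply to_nat_inj in E. injection E as EN Eg.
  rewrite EN in Eg. apply (Hg (N b)); auto. rewrite <- EN; auto.
Qed.

Lemma omega1_least (P : W -> Prop) :
  (exists u, P u) -> exists m, P m /\ forall x, P x -> ~ lt x m.
Proof.
  destruct HW as [Hwf _]. intros [u Hu]. revert Hu. pattern u. apply (well_founded_ind Hwf).
  intros x IH Hx. destruct (classic (exists y, P y /\ lt y x)) as [[y [Hy Hyx]]|Hmin].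
  - exact (IH y Hyx Hy).
  - exists x; split; auto. intros y Hy Hyx; apply Hmin; eauto.
Qed.

Definition is_sup (s : nat -> W) (l : W) :=
  (forall n, lt (s n) l) /\ forall v, lt v l -> exists n, lt v (s n).

Lemma omega1_sup (s : nat -> W) : (forall n, lt (s n) (s (S n))) -> exists l, is_sup s l.
Proof.
  intro Hinc.
  destruct (omega1_least (fun u => forall n, lt (s n) u)) as [l [Hl Hmin]].
  { apply omega1_seq_bounded. }
  exists l; split; auto. intros v Hv. apply NNPP; intro Hnot. apply (Hmin v); auto.
  intro n. destruct (lt_total W (s (S n)) v) as [h|[h|h]].
  - eapply lt_trans; eauto.
  - subst; auto.
  - exfalso; apply Hnot; exists (S n); auto.
Qed.

Lemma omega1_interleave (F G : W -> W) : exists x y : nat -> W,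
  (forall n, lt (x n) (x (S n))) /\ (forall n, lt (y n) (y (S n))) /\
  (forall n, lt (F (x n)) (y n)) /\ (forall n, lt (G (y n)) (x (S n))).
Proof.
  assert (Habove : forall p : W * W, exists c, lt (fst p) c /\ lt (snd p) c).
  { intros [a b]. destruct (lt_total W a b) as [h|[h|h]].
    - destruct (omega1_exists_gt b) as [c hc]. exists c; split; [eapply lt_trans|]; eauto.
    - subst. destruct (omega1_exists_gt b) as [c hc]. eauto.
    - destruct (omega1_exists_gt a) as [c hc]. exists c; split; [|eapply lt_trans]; eauto. }
  destruct (choice _ Habove) as [up Hup].
  destruct omega1_inhabited as [w0].
  set (xy := nat_rect (fun _ => (W * W)%type) (w0, up (F w0, F w0))
               (fun _ p => let x' := up (fst p, G (snd p)) in (x', up (snd p, F x')))).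
  exists (fun n => fst (xy n)), (fun n => snd (xy n)).
  repeat split; intro n; try apply (Hup (_, _)).
  destruct n; apply (Hup (_, _)).
Qed.

Definition monotone_family {T : Type} (P : W -> T -> Prop) :=
  forall w1 w2 t, lt w1 w2 -> P w1 t -> P w2 t.

Definition continuous_family {T : Type} (P : W -> T -> Prop) :=
  forall (s : nat -> W) l, (forall v, lt v l -> exists n, lt v (s n)) ->
  forall t, P l t -> exists n, P (s n) t.

Lemma omega1_common_closure_point (T T' : Type) (g : T -> T')
  (P : W -> T -> Prop) (Q : W -> T' -> Prop) :
  monotone_family P -> monotone_family Q -> continuous_family P -> continuous_family Q ->
  (forall w, exists w', forall t, P w t -> Q w' (g t)) ->
  (forall w', exists w, forall t, Q w' (g t) -> P w t) ->
  exists w w', forall t, P w t <-> Q w' (g t).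
Proof.
  intros monP monQ contP contQ boundPQ boundQP.
  destruct (choice _ boundPQ) as [F HF].
  destruct (choice _ boundQP) as [G HG].
  destruct (omega1_interleave F G) as [x [y [incx [incy [Fxy Gyx]]]]].
  destruct (omega1_sup x incx) as [l [xl cofx]].
  destruct (omega1_sup y incy) as [l' [yl cofy]].
  exists l, l'. intro t. split.
  - intro h. destruct (contP x l cofx t h) as [n hn].
    apply (monQ (F (x n))); [eapply lt_trans|]; eauto.
  - intro h. destruct (contQ y l' cofy (g t) h) as [n hn].
    apply (monP (G (y n))); [eapply lt_trans|]; eauto.
Qed.

End Omega1.

(** * Sequences and their orders *)

Lemma nat_dependent_choice {X : Type} (P : nat -> X -> Prop) (R : nat -> X -> X -> Prop) x0 :
  P 0 x0 -> (forall k x, P k x -> exists y, R k x y /\ P (S k) y) ->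
  exists xs : nat -> X, forall k, P k (xs k) /\ R k (xs k) (xs (S k)).
Proof.
  intros H0 Hstep.
  assert (Hstep' : forall p : nat * X,
             exists y, P (fst p) (snd p) -> R (fst p) (snd p) y /\ P (S (fst p)) y).
  { intros [k x]. destruct (classic (P k x)) as [Hp|Hp].
    - destruct (Hstep k x Hp) as [y Hy]. eauto.
    - exists x0. intro; contradiction. }
  destruct (choice _ Hstep') as [h Hh].
  set (xs := nat_rect (fun _ => X) x0 (fun k x => h (k, x))).
  assert (HP : forall k, P k (xs k)).
  { induction k as [|k IH]; [exact H0|]. apply (Hh (k, xs k)). exact IH. }
  exists xs. intro k. split; auto. apply (Hh (k, xs k)). auto.
Qed.

Lemma even_S k : Nat.even (S k) = negb (Nat.even k).
Proof. rewrite Nat.even_succ, Nat.negb_even. reflexivity. Qed.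

Lemma exists_gt_parity j (b : bool) : exists m, j < m /\ Nat.even m = b.
Proof.
  destruct (Bool.bool_dec (Nat.even (S j)) b) as [E|E]; [exists (S j); auto|].
  exists (S (S j)). split; auto. rewrite even_S.
  destruct (Nat.even (S j)), b; simpl in *; congruence.
Qed.

Section Sequences.
Context {U : Type}.
Implicit Types (a b c s : nat -> U) (x : U).

Definition agree k a b := forall i, i < k -> a i = b i.

Definition eventually_eq a b := exists K, forall k, K <= k -> a k = b k.

Definition upd s k x : nat -> U := fun i => if Nat.eqb i k then x else s i.

Definition stail a : nat -> U := fun i => a (S i).

Definition scons x a : nat -> U := fun i => match i with 0 => x | S i => a i end.

Lemma agree_sym k a b : agree k a b -> agree k b a.
Proof. intros E i hi; symmetry; auto. Qed.

Lemma agree_le k k' a b : k <= k' -> agree k' a b -> agree k a b.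
Proof. intros hk E i hi. apply E; lia. Qed.

Lemma upd_eq s k x : upd s k x k = x.
Proof. unfold upd. rewrite Nat.eqb_refl; auto. Qed.

Lemma upd_ne s k x i : i <> k -> upd s k x i = s i.
Proof. intro h. unfold upd. destruct (Nat.eqb_spec i k); [lia|auto]. Qed.

Lemma agree_upd s k x : agree k (upd s k x) s.
Proof. intros i hi. apply upd_ne; lia. Qed.

Lemma eventually_eq_upd s k x : eventually_eq s (upd s k x).
Proof. exists (S k). intros i hi. rewrite upd_ne; auto; lia. Qed.

Lemma seq_eq_cons a b : a = b <-> a 0 = b 0 /\ stail a = stail b.
Proof.
  split; [intros ->; auto|]. intros [E0 E]. apply functional_extensionality.
  intros [|i]; [exact E0 | exact (f_equal (fun f => f i) E)].
Qed.

Lemma eventually_eq_refl a : eventually_eq a a.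
Proof. exists 0. auto. Qed.

Lemma eventually_eq_sym a b : eventually_eq a b -> eventually_eq b a.
Proof. intros [K H]. exists K. intros; symmetry; auto. Qed.

Lemma eventually_eq_trans a b c : eventually_eq a b -> eventually_eq b c -> eventually_eq a c.
Proof. intros [K1 H1] [K2 H2]. exists (K1 + K2). intros k hk. rewrite H1, H2; auto; lia. Qed.

Lemma eventually_eq_stail a b : eventually_eq (stail a) (stail b) <-> eventually_eq a b.
Proof.
  split; intros [K H].
  - exists (S K). intros [|k] hk; [lia|]. apply H; lia.
  - exists K. intros k hk. apply H; lia.
Qed.

Lemma first_difference a b : a <> b -> exists j, agree j a b /\ a j <> b j.
Proof.
  intro Hne.
  assert (Hex : exists i, a i <> b i).
  { apply NNPP; intro N. apply Hne, functional_extensionality. intro i.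
    apply NNPP; intro Ni; eauto. }
  destruct (dec_inh_nat_subset_has_unique_least_element _ (fun i => classic _) Hex)
    as [j [[Hj Hmin] _]].
  exists j; split; auto. intros i hi. apply NNPP; intro N. specialize (Hmin i N). lia.
Qed.

End Sequences.

Section LexOrder.
Variable T : LinOrd.
Implicit Types (a b c s : nat -> T) (x y : T).

Definition prefix_lt k a b := exists j, j < k /\ agree j a b /\ lt (a j) (b j).
Definition prefix_le k a b := prefix_lt k a b \/ agree k a b.
Definition lexseq_lt a b := exists j, agree j a b /\ lt (a j) (b j).

Lemma prefix_lt_trans k a b c : prefix_lt k a b -> prefix_lt k b c -> prefix_lt k a c.
Proof.
  intros [j1 [h1 [e1 l1]]] [j2 [h2 [e2 l2]]].
  exists (min j1 j2); repeat split; [lia| |].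
  - intros i hi. rewrite e1 by lia. apply e2; lia.
  - destruct (lt_eq_lt_dec j1 j2) as [[H|H]|H].
    + rewrite Nat.min_l by lia. rewrite <- (e2 j1 H). auto.
    + subst. rewrite Nat.min_id. eapply lt_trans; eauto.
    + rewrite Nat.min_r by lia. rewrite (e1 j2 H). auto.
Qed.

Lemma prefix_lt_agree_r k a b c : prefix_lt k a b -> agree k b c -> prefix_lt k a c.
Proof.
  intros [j [hj [e l]]] E. exists j; repeat split; auto.
  - intros i hi. rewrite e by auto. apply E; lia.
  - rewrite <- (E j hj); auto.
Qed.

Lemma prefix_lt_agree_l k a b c : agree k a b -> prefix_lt k b c -> prefix_lt k a c.
Proof.
  intros E [j [hj [e l]]]. exists j; repeat split; auto.
  - intros i hi. rewrite E by lia. auto.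
  - rewrite (E j hj); auto.
Qed.

Lemma prefix_le_lt_trans k a b c : prefix_le k a b -> prefix_lt k b c -> prefix_lt k a c.
Proof.
  intros [h|h] h2; [eapply prefix_lt_trans | eapply prefix_lt_agree_l]; eauto.
Qed.

Lemma prefix_lt_le_trans k a b c : prefix_lt k a b -> prefix_le k b c -> prefix_lt k a c.
Proof.
  intros h [h2|h2]; [eapply prefix_lt_trans | eapply prefix_lt_agree_r]; eauto.
Qed.

Lemma prefix_le_agree_iff_r k a b c : agree k b c -> (prefix_le k a b <-> prefix_le k a c).
Proof.
  intro E. split; intros [h|h].
  - left; eapply prefix_lt_agree_r; eauto.
  - right. intros i hi. rewrite h by auto. apply E; auto.
  - left; eapply prefix_lt_agree_r; [eauto | apply agree_sym; auto].
  - right. intros i hi. rewrite h by auto. symmetry; apply E; auto.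
Qed.

Lemma prefix_le_agree_iff_l k a b c : agree k a b -> (prefix_le k a c <-> prefix_le k b c).
Proof.
  intro E. split; intros [h|h].
  - left; eapply prefix_lt_agree_l; [apply agree_sym|]; eauto.
  - right. intros i hi. rewrite <- E by auto. apply h; auto.
  - left; eapply prefix_lt_agree_l; eauto.
  - right. intros i hi. rewrite E by auto. apply h; auto.
Qed.

Lemma prefix_lt_total k a b : prefix_lt k a b \/ agree k a b \/ prefix_lt k b a.
Proof.
  destruct (classic (a = b)) as [<-|Hne]; [right; left; intros i _; auto|].
  destruct (first_difference a b Hne) as [j [Hj Hdiff]].
  destruct (Nat.lt_ge_cases j k) as [hk|hk].
  - destruct (lt_total T (a j) (b j)) as [l|[l|l]]; [|contradiction|].
    + left; exists j; auto.
    + right; right; exists j; repeat split; auto. apply agree_sym; auto.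
  - right; left. eapply agree_le; eauto.
Qed.

Lemma prefix_le_iff_not_lt k a b : prefix_le k a b <-> ~ prefix_lt k b a.
Proof.
  split.
  - intros h1 h2. destruct (prefix_le_lt_trans k a b a h1 h2) as [j [_ [_ l]]].
    eapply lt_irrefl; eauto.
  - intro h. destruct (prefix_lt_total k a b) as [H|[H|H]]; [left|right|]; tauto.
Qed.

Lemma prefix_lt_widen k k' a b : k <= k' -> prefix_lt k a b -> prefix_lt k' a b.
Proof. intros hk [j [hj r]]. exists j; split; [lia|auto]. Qed.

Lemma prefix_lt_upd_r a s k x :
  prefix_lt (S k) a (upd s k x) <-> prefix_lt k a s \/ (agree k a s /\ lt (a k) x).
Proof.
  split.
  - intros [j [hj [e l]]]. destruct (Nat.eq_dec j k) as [->|ne].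
    + right; split; [|rewrite upd_eq in l; auto].
      intros i hi. rewrite e by auto. apply upd_ne; lia.
    + left. exists j; repeat split; [lia| |].
      * intros i hi. rewrite e by auto. apply upd_ne; lia.
      * rewrite upd_ne in l; auto.
  - intros [h|[E l]].
    + apply (prefix_lt_widen k); [lia|]. apply (prefix_lt_agree_r _ _ s); auto.
      apply agree_sym, agree_upd.
    + exists k; repeat split; auto.
      * intros i hi. rewrite upd_ne by lia. apply E; auto.
      * rewrite upd_eq; auto.
Qed.

Lemma prefix_lt_upd_l a s k x :
  prefix_lt (S k) (upd s k x) a <-> prefix_lt k s a \/ (agree k s a /\ lt x (a k)).
Proof.
  split.
  - intros [j [hj [e l]]]. destruct (Nat.eq_dec j k) as [->|ne].
    + right; split; [|rewrite upd_eq in l; auto].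
      intros i hi. rewrite <- e by auto. symmetry; apply upd_ne; lia.
    + left. exists j; repeat split; [lia| |].
      * intros i hi. rewrite <- e by auto. symmetry; apply upd_ne; lia.
      * rewrite upd_ne in l; auto.
  - intros [h|[E l]].
    + apply (prefix_lt_widen k); [lia|]. apply (prefix_lt_agree_l _ _ s); auto.
      apply agree_upd.
    + exists k; repeat split; auto.
      * intros i hi. rewrite upd_ne by lia. apply E; auto.
      * rewrite upd_eq; auto.
Qed.

Lemma prefix_lt_upd_upd s k x y : lt x y -> prefix_lt (S k) (upd s k x) (upd s k y).
Proof.
  intro l. apply prefix_lt_upd_r. right; split; [apply agree_upd|]. rewrite upd_eq; auto.
Qed.

Lemma lexseq_lt_iff_prefix a b : lexseq_lt a b <-> exists k, prefix_lt k a b.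
Proof.
  split.
  - intros [j [e l]]. exists (S j), j; auto.
  - intros [k [j [_ r]]]. exists j; auto.
Qed.

Lemma lexseq_lt_irrefl a : ~ lexseq_lt a a.
Proof. intros [j [_ l]]. eapply lt_irrefl; eauto. Qed.

Lemma lexseq_lt_trans a b c : lexseq_lt a b -> lexseq_lt b c -> lexseq_lt a c.
Proof.
  rewrite !lexseq_lt_iff_prefix. intros [k1 h1] [k2 h2]. exists (k1 + k2).
  apply prefix_lt_trans with b;
    [apply (prefix_lt_widen k1) | apply (prefix_lt_widen k2)]; auto; lia.
Qed.

Lemma lexseq_lt_total a b : lexseq_lt a b \/ a = b \/ lexseq_lt b a.
Proof.
  destruct (classic (a = b)) as [E|Hne]; auto.
  destruct (first_difference a b Hne) as [j [Hj Hdiff]].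
  destruct (lt_total T (a j) (b j)) as [l|[l|l]]; [|contradiction|].
  - left; exists j; auto.
  - right; right; exists j; split; auto. apply agree_sym; auto.
Qed.

Lemma lexseq_lt_cons a b :
  lexseq_lt a b <-> lt (a 0) (b 0) \/ (a 0 = b 0 /\ lexseq_lt (stail a) (stail b)).
Proof.
  split.
  - intros [[|j] [e l]]; [left; auto|right; split].
    + apply e; lia.
    + exists j; split; auto. intros i hi; apply e; lia.
  - intros [l|[E [j [e l]]]].
    + exists 0; split; auto. intros i hi; lia.
    + exists (S j); split; auto. intros [|i] hi; auto. apply e; lia.
Qed.

End LexOrder.

Definition lastdiff_lt (n m : nat -> nat) :=
  exists j, n j < m j /\ forall i, j < i -> n i = m i.

Lemma lastdiff_lt_irrefl n : ~ lastdiff_lt n n.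
Proof. intros [j [h _]]; lia. Qed.

Lemma lastdiff_lt_trans n m p : lastdiff_lt n m -> lastdiff_lt m p -> lastdiff_lt n p.
Proof.
  intros [j1 [l1 e1]] [j2 [l2 e2]]. exists (max j1 j2); split.
  - destruct (lt_eq_lt_dec j1 j2) as [[H|H]|H].
    + rewrite Nat.max_r by lia. rewrite e1 by lia; auto.
    + subst. rewrite Nat.max_id. lia.
    + rewrite Nat.max_l by lia. rewrite <- e2 by lia; auto.
  - intros i hi. rewrite e1 by lia. apply e2; lia.
Qed.

Lemma last_difference (n m : nat -> nat) :
  eventually_eq n m -> n <> m -> exists j, n j <> m j /\ forall i, j < i -> n i = m i.
Proof.
  intros [K HK] Hne. induction K as [|K IH].
  - exfalso. apply Hne, functional_extensionality. intro; apply HK; lia.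
  - destruct (Nat.eq_dec (n K) (m K)) as [E|E].
    + apply IH. intros k hk. destruct (Nat.eq_dec k K); subst; auto. apply HK; lia.
    + exists K; split; auto; intros i hi; apply HK; lia.
Qed.

Lemma lastdiff_lt_total n m :
  eventually_eq n m -> lastdiff_lt n m \/ n = m \/ lastdiff_lt m n.
Proof.
  intro Hev. destruct (classic (n = m)) as [E|Hne]; auto.
  destruct (last_difference n m Hev Hne) as [j [hne he]].
  destruct (lt_eq_lt_dec (n j) (m j)) as [[l|l]|l]; [|contradiction|].
  - left; exists j; auto.
  - right; right; exists j; split; auto. intros; symmetry; auto.
Qed.

Lemma lastdiff_lt_cons n m :
  lastdiff_lt n m <-> lastdiff_lt (stail n) (stail m) \/ (stail n = stail m /\ n 0 < m 0).
Proof.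
  split.
  - intros [[|j] [l e]].
    + right; split; auto. apply functional_extensionality. intro i; apply e; lia.
    + left. exists j; split; auto. intros i hi; apply e; lia.
  - intros [[j [l e]]|[E l]].
    + exists (S j); split; auto. intros [|i] hi; [lia|]. apply e; lia.
    + exists 0; split; auto. intros [|i] hi; [lia|]. exact (f_equal (fun f => f i) E).
Qed.

Lemma lastdiff_lt_no_between (n m : nat -> nat) k c :
  agree k m n -> n k = S c -> lastdiff_lt (upd n k c) m -> ~ lastdiff_lt m n.
Proof.
  intros Hagree Hk.
  assert (H1 : forall i, i <> k -> upd n k c i = n i) by (intros; apply upd_ne; auto).
  assert (H2 : upd n k c k = c) by apply upd_eq.
  assert (H3 : forall i, i < k -> upd n k c i = m i).
  { intros i hi. rewrite H1, Hagree; auto; lia. }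
  set (p := upd n k c) in *; clearbody p.
  intros [j1 [l1 e1]] [j2 [l2 e2]].
  destruct (lt_eq_lt_dec j2 k) as [[d2|d2]|d2].
  - pose proof (H1 j2 ltac:(lia)); pose proof (H3 j2 d2); lia.
  - subst j2. destruct (lt_eq_lt_dec j1 k) as [[d1|d1]|d1].
    + pose proof (H3 j1 d1); lia.
    + subst; lia.
    + pose proof (e2 j1 d1); pose proof (H1 j1 ltac:(lia)); lia.
  - destruct (lt_eq_lt_dec j1 j2) as [[d1|d1]|d1].
    + pose proof (e1 j2 d1); pose proof (H1 j2 ltac:(lia)); lia.
    + subst. pose proof (H1 j2 ltac:(lia)); lia.
    + pose proof (e2 j1 d1); pose proof (H1 j1 ltac:(lia)); lia.
Qed.


(** * Order-definable sets *)

Section DefinableSets.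
Variable T : LinOrd.
Implicit Types (P : T -> Prop) (u v w : T).

Definition imm_pred P v u := P v /\ lt v u /\ forall w, P w -> lt v w -> ~ lt w u.

Definition no_imm_pred P u := P u /\ ~ exists v, imm_pred P v u.

Fixpoint derived (k : nat) : T -> Prop :=
  match k with 0 => fun _ => True | S k => no_imm_pred (derived k) end.

Lemma imm_pred_uniq P v v' u : imm_pred P v u -> imm_pred P v' u -> v = v'.
Proof.
  intros [P1 [l1 H1]] [P2 [l2 H2]].
  destruct (lt_total T v v') as [h|[h|h]]; auto.
  - destruct (H1 v' P2 h l2).
  - destruct (H2 v P1 h l1).
Qed.

Definition is_max_below P u m := P m /\ ~ lt u m /\ forall w, P w -> ~ lt u w -> ~ lt m w.

Lemma is_max_below_uniq P u m m' : is_max_below P u m -> is_max_below P u m' -> m = m'.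
Proof.
  intros [P1 [n1 H1]] [P2 [n2 H2]].
  destruct (lt_total T m m') as [h|[h|h]]; auto.
  - destruct (H1 m' P2 n2 h).
  - destruct (H2 m P1 n1 h).
Qed.

End DefinableSets.

Section OrderIsoInvariance.
Variables T T' : LinOrd.
Variable f : T -> T'.
Hypothesis f_surj : forall y, exists x, f x = y.
Hypothesis f_lt : forall x y, lt x y <-> lt (f x) (f y).
Variables (P : T -> Prop) (P' : T' -> Prop).
Hypothesis P_f : forall u, P u <-> P' (f u).

Lemma imm_pred_iso v u : imm_pred T P v u <-> imm_pred T' P' (f v) (f u).
Proof.
  unfold imm_pred. rewrite P_f, f_lt. split; intros [a [b c]]; split; auto; split; auto.
  - intros w' hw l1 l2. destruct (f_surj w') as [w <-].
    apply (c w); [apply P_f | apply f_lt | apply f_lt]; auto.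
  - intros w hw l1 l2. apply (c (f w)); [apply P_f | apply f_lt | apply f_lt]; auto.
Qed.

Lemma no_imm_pred_iso u : no_imm_pred T P u <-> no_imm_pred T' P' (f u).
Proof.
  unfold no_imm_pred. rewrite P_f. split; intros [a b]; split; auto; intros [v hv]; apply b.
  - destruct (f_surj v) as [v0 <-]. exists v0. apply imm_pred_iso; auto.
  - exists (f v). apply imm_pred_iso; auto.
Qed.

Lemma is_max_below_iso u m : is_max_below T P u m -> is_max_below T' P' (f u) (f m).
Proof.
  intros [Pm [nlt Hmax]]. split; [apply P_f; auto | split].
  - rewrite <- f_lt. auto.
  - intros w' Pw nlt' l. destruct (f_surj w') as [w <-].
    apply (Hmax w); [apply P_f | rewrite f_lt | apply f_lt]; auto.
Qed.

End OrderIsoInvariance.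

Lemma no_imm_pred_ext (T : LinOrd) (P Q : T -> Prop) :
  (forall x, P x <-> Q x) -> forall u, no_imm_pred T P u <-> no_imm_pred T Q u.
Proof.
  intros E. apply (no_imm_pred_iso T T (fun x => x)); eauto. tauto.
Qed.

Lemma derived_iso (T T' : LinOrd) (f : T -> T') :
  (forall y, exists x, f x = y) -> (forall x y, lt x y <-> lt (f x) (f y)) ->
  forall k u, derived T k u <-> derived T' k (f u).
Proof.
  intros f_surj f_lt k. induction k as [|k IH]; intro u; simpl; [tauto|].
  apply no_imm_pred_iso; auto.
Qed.

(** * The orders [Z false] and [Z true] *)

Lemma iso_of_surj_lt (X Y : LinOrd) (f : X -> Y) :
  (forall y, exists x, f x = y) -> (forall x1 x2, lt x1 x2 <-> lt (f x1) (f x2)) -> iso X Y.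
Proof.
  intros f_surj f_lt. exists f; repeat split; auto.
  - intros x1 x2 E. destruct (lt_total X x1 x2) as [h|[h|h]]; auto;
      apply f_lt in h; rewrite E in h; destruct (lt_irrefl Y _ h).
  - apply f_lt.
  - apply f_lt.
Qed.

Section Construction.
Variable W : LinOrd.
Local Notation A := (osum (rev W) W).

Definition in_right (x : A) : bool := match x with inl _ => false | inr _ => true end.

Definition alternating (j : bool) (a : nat -> A) :=
  exists K, forall k, K <= k -> in_right (a k) = xorb (Nat.even k) j.

Definition bits (j : bool) (k : nat) : nat := if xorb (Nat.even k) j then 0 else 1.

(* Eventually [a] alternates between the two copies of ω₁ and [n] between 0 and 1;
   [e] is the xor of the two phases, so that dropping [a 0] or [n 0] lands in the
   other parity. *)
Definition admissible (e : bool) (a : nat -> A) (n : nat -> nat) :=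
  exists j1 j2, alternating j1 a /\ eventually_eq n (bits j2) /\ xorb j1 j2 = e.

Lemma alternating_uniq j j' a : alternating j a -> alternating j' a -> j = j'.
Proof.
  intros [K1 H1] [K2 H2].
  pose proof (H1 (K1 + K2) ltac:(lia)) as E1; pose proof (H2 (K1 + K2) ltac:(lia)) as E2.
  rewrite E1 in E2. destruct j, j', (Nat.even (K1 + K2)); simpl in *; congruence.
Qed.

Lemma alternating_stail j a : alternating j (stail a) <-> alternating (negb j) a.
Proof.
  unfold stail. split; intros [K H].
  - exists (S K). intros [|k] hk; [lia|]. rewrite H by lia. rewrite even_S.
    destruct j, (Nat.even k); auto.
  - exists K. intros k hk. rewrite H by lia. rewrite even_S.
    destruct j, (Nat.even k); auto.
Qed.

Lemma bits_stail j : stail (bits j) = bits (negb j).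
Proof.
  apply functional_extensionality. intro k. unfold stail, bits.
  rewrite even_S. destruct j, (Nat.even k); auto.
Qed.

Lemma eventually_bits_uniq j j' n :
  eventually_eq n (bits j) -> eventually_eq n (bits j') -> j = j'.
Proof.
  intros H1 H2. destruct (eventually_eq_trans _ _ _ (eventually_eq_sym _ _ H1) H2) as [K H].
  specialize (H K (le_n K)). unfold bits in H.
  destruct j, j', (Nat.even K); simpl in *; congruence.
Qed.

Lemma admissible_stail_A e a n : admissible (negb e) (stail a) n <-> admissible e a n.
Proof.
  unfold admissible. split; intros [j1 [j2 [Ha [Hn X]]]].
  - exists (negb j1), j2. rewrite <- alternating_stail, <- negb_xorb_l, X, negb_involutive. auto.
  - exists (negb j1), j2. rewrite alternating_stail, negb_involutive, <- negb_xorb_l, X. auto.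
Qed.

Lemma admissible_stail_N e a n : admissible (negb e) a (stail n) <-> admissible e a n.
Proof.
  unfold admissible. split; intros [j1 [j2 [Ha [Hn X]]]]; exists j1, (negb j2);
    (split; [exact Ha | split]).
  - apply eventually_eq_stail. rewrite bits_stail, negb_involutive. exact Hn.
  - rewrite <- negb_xorb_r, X, negb_involutive; auto.
  - rewrite <- bits_stail. apply eventually_eq_stail; auto.
  - rewrite <- negb_xorb_r, X; auto.
Qed.

Lemma admissible_eventually_eq e a n m :
  admissible e a n -> eventually_eq n m -> admissible e a m.
Proof.
  intros [j1 [j2 [Ha [Hn X]]]] E. exists j1, j2; repeat split; auto.
  eapply eventually_eq_trans; [apply eventually_eq_sym|]; eauto.
Qed.

Lemma eventually_bits_nonzero j n k : eventually_eq n (bits j) -> exists i, k < i /\ n i <> 0.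
Proof.
  intros [K H]. set (m := S (K + k)).
  destruct (xorb (Nat.even m) j) eqn:E.
  - exists (S m). split; [lia|]. rewrite H by lia. unfold bits. rewrite even_S.
    destruct (Nat.even m), j; simpl in *; congruence.
  - exists m. split; [lia|]. rewrite H by lia. unfold bits. rewrite E; auto.
Qed.

Lemma admissible_phase e a n j1 j2 :
  alternating j1 a -> eventually_eq n (bits j2) -> admissible e a n -> e = xorb j1 j2.
Proof.
  intros Ha Hn [j1' [j2' [Ha' [Hn' X]]]].
  rewrite (alternating_uniq _ _ _ Ha Ha'), (eventually_bits_uniq _ _ _ Hn Hn'). auto.
Qed.

Definition Zc (e : bool) := {p : (nat -> A) * (nat -> nat) | admissible e (fst p) (snd p)}.
Definition za {e} (u : Zc e) : nat -> A := fst (proj1_sig u).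
Definition zn {e} (u : Zc e) : nat -> nat := snd (proj1_sig u).

Definition Zlt e (u v : Zc e) :=
  lexseq_lt A (za u) (za v) \/ (za u = za v /\ lastdiff_lt (zn u) (zn v)).

Lemma Zc_eq e (u v : Zc e) : u = v <-> za u = za v /\ zn u = zn v.
Proof.
  split; [intros ->; auto|]. destruct u as [[a n] hu], v as [[b m] hv].
  unfold za, zn; simpl. intros [-> ->]. f_equal. apply proof_irrelevance.
Qed.

Lemma Zlt_irrefl e (u : Zc e) : ~ Zlt e u u.
Proof. intros [h|[_ h]]; [eapply lexseq_lt_irrefl | eapply lastdiff_lt_irrefl]; eauto. Qed.

Lemma Zlt_trans e (u v w : Zc e) : Zlt e u v -> Zlt e v w -> Zlt e u w.
Proof.
  intros [h1|[E1 h1]] [h2|[E2 h2]].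
  - left; eapply lexseq_lt_trans; eauto.
  - left; rewrite <- E2; auto.
  - left; rewrite E1; auto.
  - right; split; [congruence | eapply lastdiff_lt_trans; eauto].
Qed.

Lemma Zlt_total e (u v : Zc e) : Zlt e u v \/ u = v \/ Zlt e v u.
Proof.
  rewrite Zc_eq. unfold Zlt.
  destruct (lexseq_lt_total A (za u) (za v)) as [h|[E|h]]; [tauto| |tauto].
  destruct (proj2_sig u) as [j1 [j2 [Ha [Hn X]]]], (proj2_sig v) as [j1' [j2' [Ha' [Hn' X']]]].
  fold (za u) in Ha; fold (zn u) in Hn; fold (za v) in Ha'; fold (zn v) in Hn'.
  rewrite E in Ha. pose proof (alternating_uniq _ _ _ Ha Ha') as <-.
  assert (j2 = j2') as <- by (destruct j1, j2, j2'; simpl in *; congruence).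
  pose proof (eq_sym E).
  destruct (lastdiff_lt_total (zn u) (zn v)) as [g|[g|g]]; [|tauto..].
  apply (eventually_eq_trans _ _ _ Hn), eventually_eq_sym; auto.
Qed.

Definition Z (e : bool) : LinOrd :=
  {| carrier := Zc e; lt := Zlt e;
     lt_irrefl := Zlt_irrefl e; lt_trans := Zlt_trans e; lt_total := Zlt_total e |}.

Definition split_A {e} (u : Z e) : lexprod A (Z (negb e)) :=
  (za u 0, exist _ (stail (za u), zn u) (proj2 (admissible_stail_A e _ _) (proj2_sig u))).

Definition split_N {e} (u : Z e) : lexprod (Z (negb e)) omega :=
  (exist _ (za u, stail (zn u)) (proj2 (admissible_stail_N e _ _) (proj2_sig u)), zn u 0).

Lemma Z_iso_A e : iso (Z e) (lexprod A (Z (negb e))).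
Proof.
  apply (iso_of_surj_lt _ _ split_A).
  - intros [x v].
    exists (exist _ (scons x (za v), zn v) (proj1 (admissible_stail_A e _ _) (proj2_sig v))).
    unfold split_A. apply pair_equal_spec; split; [|apply Zc_eq; split]; reflexivity.
  - intros u v. change (Zlt e u v <-> lex_lt A (Z (negb e)) (split_A u) (split_A v)).
    unfold lex_lt; simpl. unfold Zlt; simpl.
    rewrite lexseq_lt_cons, (seq_eq_cons (za u)). tauto.
Qed.

Lemma Z_iso_N e : iso (Z e) (lexprod (Z (negb e)) omega).
Proof.
  apply (iso_of_surj_lt _ _ split_N).
  - intros [v c].
    exists (exist _ (za v, scons c (zn v)) (proj1 (admissible_stail_N e _ _) (proj2_sig v))).
    unfold split_N. apply pair_equal_spec; split; [apply Zc_eq; split|]; reflexivity.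
  - intros u v. change (Zlt e u v <-> lex_lt (Z (negb e)) omega (split_N u) (split_N v)).
    unfold lex_lt; simpl. rewrite Zc_eq. unfold Zlt; simpl.
    rewrite lastdiff_lt_cons. tauto.
Qed.

(** * Isomorphisms preserve the ω-coordinates *)

Section ZeroPrefix.
Variable e : bool.
Implicit Types u v w : Z e.

Definition zero_prefix k u := forall i, i < k -> zn u i = 0.

Definition with_zn u (n : nat -> nat) (H : eventually_eq (zn u) n) : Z e :=
  exist _ (za u, n) (admissible_eventually_eq _ _ _ _ (proj2_sig u) H).

Lemma Zlt_same_za u v : za u = za v -> (lt u v <-> lastdiff_lt (zn u) (zn v)).
Proof.
  intro E. change (Zlt e u v <-> lastdiff_lt (zn u) (zn v)). unfold Zlt. rewrite E.
  pose proof (lexseq_lt_irrefl A (za v)). tauto.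
Qed.

Lemma za_between u v w : za v = za u -> lt v w -> lt w u -> za w = za u.
Proof.
  intros E l1 l2. change (Zlt e v w) in l1. change (Zlt e w u) in l2.
  destruct l1 as [l1|[E1 _]]; [|congruence]. exfalso.
  destruct l2 as [l2|[E2 _]].
  - apply (lexseq_lt_irrefl A (za u)). rewrite <- E at 1. eapply lexseq_lt_trans; eauto.
  - apply (lexseq_lt_irrefl A (za u)). rewrite <- E at 1. rewrite <- E2. auto.
Qed.

Definition set_zn u k c : Z e := with_zn u (upd (zn u) k c) (eventually_eq_upd _ _ _).

Lemma zn_set_zn u k c : zn (set_zn u k c) = upd (zn u) k c.
Proof. reflexivity. Qed.

Lemma imm_pred_set_zn u k c :
  zero_prefix k u -> zn u k = S c -> imm_pred (Z e) (zero_prefix k) (set_zn u k c) u.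
Proof.
  intros Hu Hc. split; [|split].
  - intros i hi. rewrite zn_set_zn, upd_ne by lia. auto.
  - apply Zlt_same_za; auto. exists k. rewrite zn_set_zn, upd_eq. split; [lia|].
    intros i hi. apply upd_ne; lia.
  - intros w Hw l1 l2.
    assert (Ew : za w = za u) by (apply (za_between u (set_zn u k c)); auto).
    apply Zlt_same_za in l1; [|auto]. apply Zlt_same_za in l2; [|auto].
    refine (lastdiff_lt_no_between (zn u) (zn w) k c _ Hc l1 l2).
    intros i hi. rewrite Hw, Hu; auto.
Qed.

Lemma no_imm_pred_zero u k :
  zero_prefix k u -> zn u k = 0 -> ~ exists v, imm_pred (Z e) (zero_prefix k) v u.
Proof.
  intros Hu H0 [v [Hv [l Hnone]]].
  assert (Hl := l). change (Zlt e v u) in Hl. destruct Hl as [l'|[E [j [lj ej]]]].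
  - destruct (proj2_sig u) as [j1 [j2 [_ [Hn _]]]].
    destruct (eventually_bits_nonzero j2 (zn u) k Hn) as [j [hj hne]].
    apply (Hnone (set_zn u j (zn u j - 1))).
    + intros i hi. rewrite zn_set_zn, upd_ne by lia. auto.
    + left. exact l'.
    + apply Zlt_same_za; auto. exists j. rewrite zn_set_zn, upd_eq. split; [lia|].
      intros i hi. apply upd_ne; lia.
  - assert (hj : k < j).
    { destruct (lt_eq_lt_dec j k) as [[c|c]|c]; auto; exfalso.
      - rewrite Hv, Hu in lj; auto. lia.
      - subst. lia. }
    apply (Hnone (set_zn v k (S (zn v k)))).
    + intros i hi. rewrite zn_set_zn, upd_ne by lia. auto.
    + apply Zlt_same_za; auto. exists k. rewrite zn_set_zn, upd_eq. split; [lia|].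
      intros i hi. rewrite upd_ne; auto; lia.
    + apply Zlt_same_za; auto. exists j. rewrite zn_set_zn, upd_ne by lia. split; auto.
      intros i hi. rewrite upd_ne by lia. auto.
Qed.

Lemma imm_pred_zn u v k :
  zero_prefix k u -> imm_pred (Z e) (zero_prefix k) v u -> zn u k = S (zn v k).
Proof.
  intros Hu Hv. destruct (zn u k) as [|c] eqn:E.
  - exfalso. apply (no_imm_pred_zero u k Hu E). eauto.
  - rewrite (imm_pred_uniq _ _ _ _ _ Hv (imm_pred_set_zn u k c Hu E)).
    rewrite zn_set_zn, upd_eq. auto.
Qed.

Lemma no_imm_pred_zero_prefix u k :
  no_imm_pred (Z e) (zero_prefix k) u <-> zero_prefix (S k) u.
Proof.
  split.
  - intros [Hu Hnone] i hi. destruct (Nat.eq_dec i k) as [->|ne]; [|apply Hu; lia].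
    destruct (zn u k) as [|c] eqn:E; auto. exfalso; apply Hnone.
    exists (set_zn u k c). apply imm_pred_set_zn; auto.
  - intros Hu. assert (Hk : zero_prefix k u) by (intros i hi; apply Hu; lia).
    split; auto. apply no_imm_pred_zero; auto.
Qed.

Lemma derived_zero_prefix k u : derived (Z e) k u <-> zero_prefix k u.
Proof.
  revert u. induction k as [|k IH]; intro u; simpl.
  - split; auto. intros _ i hi; lia.
  - rewrite (no_imm_pred_ext _ _ (zero_prefix k)); auto. apply no_imm_pred_zero_prefix.
Qed.

Definition zero_below k (n : nat -> nat) (i : nat) : nat := if i <? k then 0 else n i.

Lemma eventually_eq_zero_below k n : eventually_eq n (zero_below k n).
Proof. exists k. intros i hi. unfold zero_below. destruct (Nat.ltb_spec i k); [lia|auto]. Qed.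

Definition truncate u k : Z e := with_zn u (zero_below k (zn u)) (eventually_eq_zero_below _ _).

Lemma zn_truncate u k : zn (truncate u k) = zero_below k (zn u).
Proof. reflexivity. Qed.

Lemma truncate_is_max_below u k : is_max_below (Z e) (zero_prefix k) u (truncate u k).
Proof.
  split; [|split].
  - intros i hi. rewrite zn_truncate. unfold zero_below. destruct (Nat.ltb_spec i k); [auto|lia].
  - rewrite Zlt_same_za by auto. intros [j [lj _]].
    rewrite zn_truncate in lj. unfold zero_below in lj.
    destruct (Nat.ltb_spec j k); lia.
  - intros w Hw nl l. apply nl. change (Zlt e (truncate u k) w) in l. change (Zlt e u w).
    destruct l as [l|[E [j [lj ej]]]]; [left; auto|right; split; auto].
    rewrite zn_truncate in lj, ej. unfold zero_below in lj, ej. destruct (Nat.ltb_spec j k).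
    + rewrite Hw in lj; auto. lia.
    + exists j; split; auto. intros i hi. specialize (ej i hi).
      destruct (Nat.ltb_spec i k); [lia|auto].
Qed.

End ZeroPrefix.

Section ZnRigidity.
Variables e e' : bool.
Variable f : Z e -> Z e'.
Hypothesis f_surj : forall y, exists x, f x = y.
Hypothesis f_lt : forall x y, lt x y <-> lt (f x) (f y).

Lemma zero_prefix_iso k u : zero_prefix e k u <-> zero_prefix e' k (f u).
Proof. rewrite <- !derived_zero_prefix. apply derived_iso; auto. Qed.

Lemma zn_iso_zero_prefix k c u : zero_prefix e k u -> zn u k = c -> zn (f u) k = c.
Proof.
  revert u. induction c as [|c IH]; intros u Hu Hc.
  - assert (Hu' : zero_prefix e (S k) u).
    { intros i hi. destruct (Nat.eq_dec i k); subst; auto. apply Hu; lia. }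
    apply zero_prefix_iso in Hu'. apply Hu'; lia.
  - pose proof (imm_pred_set_zn e u k c Hu Hc) as Hpred.
    assert (Hfpred := proj1 (imm_pred_iso _ _ f f_surj f_lt _ _ (zero_prefix_iso k) _ _) Hpred).
    rewrite (imm_pred_zn e' (f u) _ k (proj1 (zero_prefix_iso k u) Hu) Hfpred).
    f_equal. apply IH; [apply Hpred | apply upd_eq].
Qed.

Lemma zn_iso u : zn (f u) = zn u.
Proof.
  apply functional_extensionality. intro k.
  assert (Etr : f (truncate e u k) = truncate e' (f u) k).
  { eapply is_max_below_uniq; [|apply truncate_is_max_below].
    apply (is_max_below_iso _ _ f f_surj f_lt _ _ (zero_prefix_iso k)).
    apply truncate_is_max_below. }
  assert (Hk : forall e0 (w : Z e0), zn (truncate e0 w k) k = zn w k).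
  { intros e0 w. rewrite zn_truncate. unfold zero_below. destruct (Nat.ltb_spec k k); [lia|auto]. }
  rewrite <- (Hk e' (f u)), <- Etr. apply zn_iso_zero_prefix; auto.
  apply truncate_is_max_below.
Qed.

End ZnRigidity.

(** * A point whose A-coordinates an isomorphism fixes *)

Hypothesis HW : is_omega1 W.

Definition w0 : W := epsilon (omega1_inhabited W HW) (fun _ => True).

Definition alt_seq (i : nat) : A := if Nat.even i then inr w0 else inl w0.

Definition extend (b : nat -> A) (K i : nat) : A := if i <? K then b i else alt_seq i.

Lemma admissible_extend e b K : admissible e (extend b K) (bits e).
Proof.
  exists false, e. repeat split; [|apply eventually_eq_refl].
  exists K. intros k hk. unfold extend, alt_seq. destruct (Nat.ltb_spec k K); [lia|].
  destruct (Nat.even k); auto.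
Qed.

Definition ext_point e b K : Z e := exist _ (extend b K, bits e) (admissible_extend e b K).

Lemma agree_ext_point e b K : agree K (za (ext_point e b K)) b.
Proof. intros i hi. unfold za; simpl. unfold extend. destruct (Nat.ltb_spec i K); [auto|lia]. Qed.

Lemma Zlt_prefix_le e (u v : Z e) m : lt u v -> prefix_le A m (za u) (za v).
Proof.
  intro l. change (Zlt e u v) in l. destruct l as [[j [ej lj]]|[E _]].
  - destruct (Nat.lt_ge_cases j m); [left; exists j; auto|right].
    intros i hi. apply ej; lia.
  - right. intros i _. rewrite E; auto.
Qed.

Lemma prefix_lt_Zlt e (u v : Z e) m : prefix_lt A m (za u) (za v) -> lt u v.
Proof. intro h. left. apply lexseq_lt_iff_prefix. eauto. Qed.

(* Refining a cut from below by a letter of the right copy of ω₁, or a cut from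
   above by a letter of the left copy, makes the cut grow continuously with the
   letter, as the closing-off argument requires; hence the letters alternate. *)
Definition cut_below s k w (a : nat -> A) := prefix_lt A (S k) a (upd s k (inr w)).
Definition cut_above s k w (a : nat -> A) := prefix_lt A (S k) (upd s k (inl w)) a.

Lemma cut_below_monotone s k : monotone_family W (cut_below s k).
Proof.
  intros w1 w2 a l h. eapply prefix_lt_trans; [exact h|]. apply prefix_lt_upd_upd. exact l.
Qed.

Lemma cut_above_monotone s k : monotone_family W (cut_above s k).
Proof.
  intros w1 w2 a l h. eapply prefix_lt_trans; [|exact h]. apply prefix_lt_upd_upd. exact l.
Qed.

Lemma cut_below_continuous s k : continuous_family W (cut_below s k).
Proof.
  intros sq l Hcof a h. unfold cut_below in *. setoid_rewrite prefix_lt_upd_r.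
  apply prefix_lt_upd_r in h. destruct h as [h|[E h]]; [exists 0; auto|].
  destruct (a k) as [z|v] eqn:Ek; [exists 0; right; split; auto; exact I|].
  destruct (Hcof v h) as [n hn]. exists n. right; auto.
Qed.

Lemma cut_above_continuous s k : continuous_family W (cut_above s k).
Proof.
  intros sq l Hcof a h. unfold cut_above in *. setoid_rewrite prefix_lt_upd_l.
  apply prefix_lt_upd_l in h. destruct h as [h|[E h]]; [exists 0; auto|].
  destruct (a k) as [v|z] eqn:Ek; [|exists 0; right; split; auto; exact I].
  destruct (Hcof v h) as [n hn]. exists n. right; auto.
Qed.

Lemma cut_below_exists s k a : prefix_le A k a s -> exists w, cut_below s k w a.
Proof.
  intro h. unfold cut_below. setoid_rewrite prefix_lt_upd_r.
  destruct h as [h|h]; [exists w0; auto|].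
  destruct (a k) as [z|v] eqn:Ek.
  - exists w0. right; split; auto; exact I.
  - destruct (omega1_exists_gt W HW v) as [w hw]. exists w. right; auto.
Qed.

Lemma cut_above_exists s k a : prefix_le A k s a -> exists w, cut_above s k w a.
Proof.
  intro h. unfold cut_above. setoid_rewrite prefix_lt_upd_l.
  destruct h as [h|h]; [exists w0; auto|].
  destruct (a k) as [v|z] eqn:Ek.
  - destruct (omega1_exists_gt W HW v) as [w hw]. exists w. right; auto.
  - exists w0. right; split; auto; exact I.
Qed.

Section CutBounds.
Variables e e' : bool.
Variable g : Z e -> Z e'.
Hypothesis g_lt : forall u v, lt u v -> lt (g u) (g v).

Lemma cut_below_bound k s s' :
  (forall u, prefix_le A k (za u) s -> prefix_le A k (za (g u)) s') ->
  forall w, exists w', forall u, cut_below s k w (za u) -> cut_below s' k w' (za (g u)).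
Proof.
  intros Hle w. set (u0 := ext_point e (upd s k (inr w)) (S k)).
  assert (E0 : agree (S k) (za u0) (upd s k (inr w))) by apply agree_ext_point.
  destruct (cut_below_exists s' k (za (g u0))) as [w' Hw'].
  { apply Hle. right. intros i hi. rewrite E0, upd_ne by lia. auto. }
  exists w'. intros u hu. eapply prefix_le_lt_trans; [|exact Hw'].
  apply Zlt_prefix_le, g_lt, (prefix_lt_Zlt _ _ _ (S k)).
  eapply prefix_lt_agree_r; [exact hu|]. apply agree_sym; auto.
Qed.

Lemma cut_above_bound k s s' :
  (forall u, prefix_le A k s (za u) -> prefix_le A k s' (za (g u))) ->
  forall w, exists w', forall u, cut_above s k w (za u) -> cut_above s' k w' (za (g u)).
Proof.
  intros Hle w. set (u0 := ext_point e (upd s k (inl w)) (S k)).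
  assert (E0 : agree (S k) (za u0) (upd s k (inl w))) by apply agree_ext_point.
  destruct (cut_above_exists s' k (za (g u0))) as [w' Hw'].
  { apply Hle. right. intros i hi. rewrite E0, upd_ne by lia. auto. }
  exists w'. intros u hu. eapply prefix_lt_le_trans; [exact Hw'|].
  apply Zlt_prefix_le, g_lt, (prefix_lt_Zlt _ _ _ (S k)).
  eapply prefix_lt_agree_l; [exact E0|exact hu].
Qed.

End CutBounds.

Section Matching.
Variables e e' : bool.
Variable f : Z e -> Z e'.
Variable g : Z e' -> Z e.
Hypothesis f_g : forall v, f (g v) = v.
Hypothesis g_f : forall u, g (f u) = u.
Hypothesis f_lt : forall u v, lt u v <-> lt (f u) (f v).

Lemma g_lt u v : lt u v -> lt (g u) (g v).
Proof. intro h. apply f_lt. rewrite !f_g. auto. Qed.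

Definition matches_below k s s' :=
  forall u, prefix_le A k (za u) s <-> prefix_le A k (za (f u)) s'.
Definition matches_above k s s' :=
  forall u, prefix_le A k s (za u) <-> prefix_le A k s' (za (f u)).

Lemma matches_below_step k s s' : matches_below k s s' ->
  exists y y', matches_above (S k) (upd s k (inr y)) (upd s' k (inr y')).
Proof.
  intro Hm.
  destruct (omega1_common_closure_point W HW (Z e) (Z e') f
              (fun w u => cut_below s k w (za u)) (fun w v => cut_below s' k w (za v)))
    as [y [y' H]].
  - intros w1 w2 u. apply cut_below_monotone.
  - intros w1 w2 v. apply cut_below_monotone.
  - intros sq l Hcof u. apply cut_below_continuous; auto.
  - intros sq l Hcof v. apply cut_below_continuous; auto.
  - apply cut_below_bound; [intros; apply f_lt; auto | apply Hm].
  - intro w'. destruct (cut_below_bound e' e g g_lt k s' s) with (w := w') as [w Hw].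
    + intros v h. apply Hm. rewrite f_g. auto.
    + exists w. intros u h. rewrite <- (g_f u). apply Hw. auto.
  - exists y, y'. intro u. unfold cut_below in H. rewrite !prefix_le_iff_not_lt, H. tauto.
Qed.

Lemma matches_above_step k s s' : matches_above k s s' ->
  exists z z', matches_below (S k) (upd s k (inl z)) (upd s' k (inl z')).
Proof.
  intro Hm.
  destruct (omega1_common_closure_point W HW (Z e) (Z e') f
              (fun w u => cut_above s k w (za u)) (fun w v => cut_above s' k w (za v)))
    as [z [z' H]].
  - intros w1 w2 u. apply cut_above_monotone.
  - intros w1 w2 v. apply cut_above_monotone.
  - intros sq l Hcof u. apply cut_above_continuous; auto.
  - intros sq l Hcof v. apply cut_above_continuous; auto.
  - apply cut_above_bound; [intros; apply f_lt; auto | apply Hm].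
  - intro w'. destruct (cut_above_bound e' e g g_lt k s' s) with (w := w') as [w Hw].
    + intros v h. apply Hm. rewrite f_g. auto.
    + exists w. intros u h. rewrite <- (g_f u). apply Hw. auto.
  - exists z, z'. intro u. unfold cut_above in H. rewrite !prefix_le_iff_not_lt, H. tauto.
Qed.

Definition matching k s s' :=
  if Nat.even k then matches_below k s s' else matches_above k s s'.

Lemma matching_step k s s' : matching k s s' -> exists x x',
  in_right x = Nat.even k /\ in_right x' = Nat.even k /\ matching (S k) (upd s k x) (upd s' k x').
Proof.
  unfold matching. rewrite even_S. destruct (Nat.even k); simpl; intro H.
  - destruct (matches_below_step _ _ _ H) as [y [y' Hy]]. exists (inr y), (inr y'). auto.
  - destruct (matches_above_step _ _ _ H) as [z [z' Hz]]. exists (inl z), (inl z'). auto.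
Qed.

Lemma matching_agree k s s' t t' :
  agree k s t -> agree k s' t' -> matching k s s' -> matching k t t'.
Proof.
  unfold matching. intros E E'. destruct (Nat.even k); intros H u.
  - rewrite <- (prefix_le_agree_iff_r _ _ _ _ _ E), <- (prefix_le_agree_iff_r _ _ _ _ _ E').
    apply H.
  - rewrite <- (prefix_le_agree_iff_l _ _ _ _ _ E), <- (prefix_le_agree_iff_l _ _ _ _ _ E').
    apply H.
Qed.

Lemma matching_sequences : exists a a',
  (forall k, in_right (a k) = Nat.even k /\ in_right (a' k) = Nat.even k) /\
  forall k, matching k a a'.
Proof.
  destruct (nat_dependent_choice (fun k (p : (nat -> A) * (nat -> A)) => matching k (fst p) (snd p))
              (fun k p q => exists x x', q = (upd (fst p) k x, upd (snd p) k x') /\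
                 in_right x = Nat.even k /\ in_right x' = Nat.even k) (alt_seq, alt_seq))
    as [xs Hxs].
  - intro u. split; intros _; right; intros i hi; lia.
  - intros k [s s'] H. destruct (matching_step k s s' H) as [x [x' [hx [hx' Hm]]]].
    exists (upd s k x, upd s' k x'). split; auto. exists x, x'. auto.
  - set (a i := fst (xs (S i)) i); set (a' i := snd (xs (S i)) i).
    assert (Hstep : forall k, exists x x', xs (S k) = (upd (fst (xs k)) k x, upd (snd (xs k)) k x')
                      /\ in_right x = Nat.even k /\ in_right x' = Nat.even k) by apply Hxs.
    assert (Hagree : forall k, agree k (fst (xs k)) a /\ agree k (snd (xs k)) a').
    { induction k as [|k [IH IH']]; [split; intros i hi; lia|].
      destruct (Hstep k) as [x [x' [E _]]].
      split; intros i hi; unfold a, a'; rewrite E; simpl;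
        (destruct (Nat.eq_dec i k) as [->|ne]; [rewrite E; reflexivity|]);
        rewrite upd_ne by auto; [apply IH | apply IH']; lia. }
    exists a, a'. split.
    + intro k. destruct (Hstep k) as [x [x' [E [hx hx']]]].
      unfold a, a'. rewrite E. simpl. rewrite !upd_eq. auto.
    + intro k. apply (matching_agree k (fst (xs k)) (snd (xs k))); apply Hagree || apply Hxs.
Qed.

Lemma matching_fixed_point a a' :
  (forall k, matching k a a') -> forall u, za u = a -> za (f u) = a'.
Proof.
  intros Hm u Hu. apply NNPP; intro Hne.
  destruct (first_difference _ _ Hne) as [j [Hj Hd]].
  destruct (lt_total A (za (f u) j) (a' j)) as [l|[l|l]]; [|contradiction|].
  - destruct (exists_gt_parity j false) as [m [hm pm]].
    pose proof (Hm m) as Hmm. unfold matching in Hmm. rewrite pm in Hmm.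
    assert (H : prefix_le A m a' (za (f u))) by (apply Hmm; right; rewrite Hu; intros i _; auto).
    apply prefix_le_iff_not_lt in H. apply H. exists j; auto.
  - destruct (exists_gt_parity j true) as [m [hm pm]].
    pose proof (Hm m) as Hmm. unfold matching in Hmm. rewrite pm in Hmm.
    assert (H : prefix_le A m (za (f u)) a') by (apply Hmm; right; rewrite Hu; intros i _; auto).
    apply prefix_le_iff_not_lt in H. apply H. exists j; repeat split; auto. apply agree_sym; auto.
Qed.

End Matching.

Lemma Z_not_iso : ~ iso (Z false) (Z true).
Proof.
  intros [f [f_surj [f_inj f_lt]]].
  destruct (choice _ f_surj) as [g f_g].
  assert (g_f : forall u, g (f u) = u) by (intro u; apply f_inj; rewrite f_g; auto).
  destruct (matching_sequences false true f g f_g g_f f_lt) as [a [a' [Hside Hm]]].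
  assert (Ha : alternating false a).
  { exists 0. intros k _. rewrite (proj1 (Hside k)). destruct (Nat.even k); auto. }
  assert (Ha' : alternating false a').
  { exists 0. intros k _. rewrite (proj2 (Hside k)). destruct (Nat.even k); auto. }
  assert (Hu : admissible false a (bits false)).
  { exists false, false. repeat split; auto. apply eventually_eq_refl. }
  set (u := exist _ (a, bits false) Hu : Z false).
  assert (Hfa : za (f u) = a') by (apply (matching_fixed_point _ _ f a a'); auto).
  assert (Hfn : zn (f u) = bits false) by apply (zn_iso false true f f_surj f_lt u).
  pose proof (proj2_sig (f u)) as Hadm. change (admissible true (za (f u)) (zn (f u))) in Hadm.
  rewrite Hfa, Hfn in Hadm.
  discriminate (admissible_phase _ _ _ _ _ Ha' (eventually_eq_refl _) Hadm).
Qed.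

End Construction.

Theorem mainTheorem1 :
  forall W : LinOrd, is_omega1 W ->
  let A := osum (rev W) W in
  exists X Y : LinOrd,
    ~ iso X Y /\
    iso X (lexprod A Y) /\ iso X (lexprod Y omega) /\
    iso Y (lexprod A X) /\ iso Y (lexprod X omega).
Proof.
  intros W HW A.
  exists (Z W false), (Z W true).
  repeat split.
  - exact (Z_not_iso W HW).
  - exact (Z_iso_A W false).
  - exact (Z_iso_N W false).
  - exact (Z_iso_A W true).
  - exact (Z_iso_N W true).
Qed.
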